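(* Let $\tau>0$, $x_t\in\mathbb{R}^n$, let $i_t$ be an index, and let $x_{t+1}=\operatorname{prox}_{\tau g}(x_t-\tau\nabla f_{i_t}(x_t))$. Then for every $z\in\mathbb{R}^n$ and every $\epsilon>0$, \begin{align*} \|x_{t+1}-z\|^2-\|x_t-z\|^2&\le 2\tau[f_{i_t}(z)-f_{i_t}(x_t)]+2\tau\bigl(g(z)-g(x_{t+1})\bigr)+\frac{\tau}{\epsilon}\|\nabla f_{i_t}(x_t)-\nabla f(x_t)\|^2\\ &\quad+2\tau[f(x_t)-f(x_{t+1})]+[\tau\epsilon+\tau L-1]\|x_t-x_{t+1}\|^2. \end{align*}
   Context: Let $D$ be a probability distribution on an index set, and for each index $i$ let $f_i:\mathbb{R}^n\to\mathbb{R}$ be convex and $L$-smooth (differentiable with $L$-Lipschitz gradient, $L>0$); let $f(x)=\mathbb{E}_{i\sim D}[f_i(x)]$ with $\mathbb{E}_{i\sim D}[\nabla f_i(x)]=\nabla f(x)$. Let $g:\mathbb{R}^n\to\mathbb{R}\cup\{+\infty\}$ be proper, convex and lower semicontinuous. $\operatorname{prox}_{\tau g}(y)=\arg\min_u\{\tau g(u)+\tfrac12\|y-u\|^2\}$. *)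

From HB Require Import structures.
From mathcomp Require Import all_boot all_order all_algebra.
From mathcomp Require Import all_classical all_reals all_analysis.
Set Implicit Arguments. Unset Strict Implicit. Unset Printing Implicit Defensive.
Import Order.TTheory GRing.Theory Num.Theory.
Import numFieldNormedType.Exports.
Local Open Scope classical_set_scope.
Local Open Scope ring_scope.

Definition dotv {R : realType} {n : nat} (u v : 'rV[R]_n) : R :=
  \sum_(j < n) u ord0 j * v ord0 j.
Definition sqnorm {R : realType} {n : nat} (v : 'rV[R]_n) : R := dotv v v.
Definition enorm {R : realType} {n : nat} (v : 'rV[R]_n) : R :=
  Num.sqrt (sqnorm v).

Definition is_gradient {R : realType} {n : nat}
  (f : 'rV[R]_n -> R^o) (gradf : 'rV[R]_n -> 'rV[R]_n) : Prop :=
  forall x, differentiable f x /\ forall h, 'd f x h = dotv (gradf x) h.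

Definition convex_fun {R : realType} {n : nat} (f : 'rV[R]_n -> R) : Prop :=
  forall (x y : 'rV[R]_n) (t : R), 0 <= t -> t <= 1 ->
    f (t *: x + (1 - t) *: y) <= t * f x + (1 - t) * f y.

Definition L_smooth {R : realType} {n : nat} (L : R)
  (f : 'rV[R]_n -> R^o) (gradf : 'rV[R]_n -> 'rV[R]_n) : Prop :=
  is_gradient f gradf /\
  forall x y, enorm (gradf x - gradf y) <= L * enorm (x - y).

(* Extended-real-valued g : R^n -> R U {+oo}. *)
Definition proper_fun {R : realType} {n : nat} (g : 'rV[R]_n -> \bar R) : Prop :=
  (forall x, g x != -oo%E) /\ (exists x, g x \is a fin_num).

Definition convex_efun {R : realType} {n : nat} (g : 'rV[R]_n -> \bar R) : Prop :=
  forall (x y : 'rV[R]_n) (t : R), 0 < t -> t < 1 ->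
    (g (t *: x + (1 - t) *: y)%R <= t%:E * g x + (1 - t)%:E * g y)%E.

Definition lsc {R : realType} {n : nat} (g : 'rV[R]_n -> \bar R) : Prop :=
  forall x (a : \bar R), (a < g x)%E -> \forall y \near x, (a < g y)%E.

Definition is_prox {R : realType} {n : nat} (tau : R) (g : 'rV[R]_n -> \bar R)
  (y p : 'rV[R]_n) : Prop :=
  forall u, (tau%:E * g p + (sqnorm (y - p)%R / 2)%:E <=
             tau%:E * g u + (sqnorm (y - u)%R / 2)%:E)%E.

Definition vexpect {R : realType} {d} {I : measurableType d}
  (D : probability I R) {n : nat} (G : I -> 'rV[R]_n) : 'rV[R]_n :=
  \row_(j < n) Rintegral D setT (fun i => G i ord0 j).

From HB Require Import structures.
From mathcomp Require Import all_boot all_order all_algebra.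
From mathcomp Require Import all_classical all_reals all_analysis.
From mathcomp Require Import ring lra.
Set Implicit Arguments. Unset Strict Implicit. Unset Printing Implicit Defensive.
Import Order.TTheory GRing.Theory Num.Theory.
Import numFieldNormedType.Exports.
Local Open Scope classical_set_scope.
Local Open Scope ring_scope.

(* The prox step p = prox_{tau g}(x - tau G), with G the sampled gradient,
   satisfies the variational inequality
   tau (g p - g z) <= <x - tau G - p, p - z>.  Combined with the identity
   |p - z|^2 - |x - z|^2 = - |x - p|^2 - 2 <x - p, p - z>, it leaves
   2 tau <G, z - p>, which splits as
   <G, z - x> + <G - grad f x, x - p> + <grad f x, x - p>.
   The three terms are bounded by convexity of f_i, by Young's inequality
   with weight eps, and by the descent lemma for f, obtained by averaging
   the descent lemmas of the L-smooth f_i. *)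

Lemma le0_of_forall_le_mulr (R : realFieldType) (a k : R) :
  (forall s, 0 < s -> s < 1 -> a <= s * k) -> a <= 0.
Proof.
move=> hle; rewrite leNgt; apply/negP => a_gt0.
have k_ge0 : 0 <= `|k| := normr_ge0 k.
pose s := a / (2 * a + `|k|).
have s_gt0 : 0 < s by rewrite divr_gt0 //; lra.
have s_lt1 : s < 1 by rewrite ltr_pdivrMr; lra.
have : a <= s * `|k| by apply: le_trans (hle s s_gt0 s_lt1) _; rewrite ler_pM2l // ler_norm.
rewrite /s mulrAC ler_pdivlMr; last lra.
nra.
Qed.

Section EuclideanInnerProduct.
Variables (R : realType) (n : nat).
Implicit Types (u v w : 'rV[R]_n).

Lemma dotvC u v : dotv u v = dotv v u.
Proof. by apply: eq_bigr => j _; rewrite mulrC. Qed.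

Lemma dotvDl u w v : dotv (u + w) v = dotv u v + dotv w v.
Proof. by rewrite /dotv -big_split; apply: eq_bigr => j _; rewrite !mxE mulrDl. Qed.

Lemma dotvNl u v : dotv (- u) v = - dotv u v.
Proof. by rewrite /dotv -sumrN; apply: eq_bigr => j _; rewrite !mxE mulNr. Qed.

Lemma dotvZl (a : R) u v : dotv (a *: u) v = a * dotv u v.
Proof. by rewrite /dotv mulr_sumr; apply: eq_bigr => j _; rewrite !mxE mulrA. Qed.

Lemma dotvBl u w v : dotv (u - w) v = dotv u v - dotv w v.
Proof. by rewrite dotvDl dotvNl. Qed.

Lemma dotvDr u w v : dotv v (u + w) = dotv v u + dotv v w.
Proof. by rewrite dotvC dotvDl !(dotvC v). Qed.

Lemma dotvNr u v : dotv v (- u) = - dotv v u.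
Proof. by rewrite dotvC dotvNl dotvC. Qed.

Lemma dotvBr u w v : dotv v (u - w) = dotv v u - dotv v w.
Proof. by rewrite dotvDr dotvNr. Qed.

Lemma dotvZr (a : R) u v : dotv v (a *: u) = a * dotv v u.
Proof. by rewrite dotvC dotvZl dotvC. Qed.

Definition dotvE := (dotvDl, dotvBl, dotvNl, dotvZl, dotvDr, dotvBr, dotvNr, dotvZr).

Lemma sqnorm_ge0 u : 0 <= sqnorm u.
Proof. by apply: sumr_ge0 => j _; rewrite -expr2 sqr_ge0. Qed.

Lemma sqnormN u : sqnorm (- u) = sqnorm u.
Proof. by rewrite /sqnorm dotvNl dotvNr opprK. Qed.

Lemma sqnormZ (a : R) u : sqnorm (a *: u) = a ^+ 2 * sqnorm u.
Proof. by rewrite /sqnorm dotvZl dotvZr mulrA -expr2. Qed.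

Lemma sqnormB u v : sqnorm (u - v) = sqnorm u - 2 * dotv u v + sqnorm v.
Proof. rewrite /sqnorm !dotvE (dotvC v u); ring. Qed.

Lemma enorm_sqr u : enorm u ^+ 2 = sqnorm u.
Proof. exact/sqr_sqrtr/sqnorm_ge0. Qed.

Lemma enormZ (a : R) u : enorm (a *: u) = `|a| * enorm u.
Proof. by rewrite /enorm sqnormZ sqrtrM ?sqr_ge0 // sqrtr_sqr. Qed.

Lemma dotv_young (t : R) u v : 0 < t ->
  2 * dotv u v <= t * sqnorm u + sqnorm v / t.
Proof.
move=> t_gt0; have := sqnorm_ge0 (t *: u - v).
rewrite sqnormB sqnormZ dotvZl => h.
have -> : t * sqnorm u + sqnorm v / t = (t ^+ 2 * sqnorm u + sqnorm v) / t.
  by field; rewrite lt0r_neq0.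
by rewrite ler_pdivlMr //; lra.
Qed.

Lemma dotv_le_of_enorm_le (k : R) u v : 0 < k -> enorm u <= k * enorm v ->
  dotv u v <= k * sqnorm v.
Proof.
move=> k_gt0 le_uv.
have le_sq : sqnorm u <= k ^+ 2 * sqnorm v.
  rewrite -!enorm_sqr -exprMn ler_pXn2r ?nnegrE ?sqrtr_ge0 //.
  by rewrite mulr_ge0 ?sqrtr_ge0 ?ltW.
have := @dotv_young k^-1 u v; rewrite invr_gt0 invrK => /(_ k_gt0).
have : k^-1 * sqnorm u <= k * sqnorm v by rewrite ler_pdivrMl // mulrA -expr2.
lra.
Qed.

End EuclideanInnerProduct.

Section GradientInequalities.
Variables (R : realType) (n : nat).
Variables (f : 'rV[R]_n -> R^o) (G : 'rV[R]_n -> 'rV[R]_n).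
Hypothesis gradG : is_gradient f G.

Lemma is_derive_line (x d : 'rV[R]_n) (t : R) :
  is_derive t 1 (fun s : R => f (x + s *: d)) (dotv (G (x + t *: d)) d).
Proof.
pose line := (cst x + ( *:%R ^~ d)) : R -> 'rV[R]_n.
have line_diff : is_diff t line (0 + ( *:%R ^~ d)).
  exact: is_diffD (is_diff_cst x t) (is_diff_scalel t d).
have dline : differentiable line t by exact: ex_diff.
have dline1 : 'd line t 1 = d by rewrite diff_val /= add0r scale1r.
have dfline : differentiable (f \o line) t.
  by apply: differentiable_comp => //; exact: (gradG _).1.
have := derivableP (diff_derivable (v := 1 : R^o) dfline).
by rewrite deriveE // (diff_comp dline (gradG _).1) /= dline1 (gradG _).2.
Qed.

Lemma convex_gradient_le (x z : 'rV[R]_n) : convex_fun f ->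
  dotv (G x) (z - x) <= f z - f x.
Proof.
(* The right difference quotients of [s |-> f (x + s *: d)] at 0 are bounded by
   [f z - f x]. *)
move=> fcvx; set d := z - x.
have [/cvg_dnbhs_at_right q_right] := is_derive_line x d 0.
rewrite scale0r addr0 => <-.
rewrite /derive -(cvg_lim _ q_right) //; apply: limr_le; first exact: cvgP q_right.
near=> h.
have h_gt0 : 0 < h by near: h; exact: nbhs_right_gt.
have h_lt1 : h < 1 by near: h; exact: nbhs_right_lt.
rewrite /= addr0 scale0r addr0 -[h%:A]/(h * 1) mulr1 -[h^-1 *: _]/(h^-1 * _) ler_pdivrMl //.
have -> : x + h *: d = h *: z + (1 - h) *: x.
  by apply/matrixP => i j; rewrite !mxE; ring.
by have := fcvx z x h (ltW h_gt0) (ltW h_lt1); lra.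
Unshelve. all: by end_near. Qed.

Lemma smooth_descent (L : R) (x y : 'rV[R]_n) : 0 < L ->
  (forall u v, enorm (G u - G v) <= L * enorm (u - v)) ->
  f y <= f x + dotv (G x) (y - x) + L / 2 * sqnorm (y - x).
Proof.
move=> L_gt0 lipG; set d := y - x.
set c1 := dotv (G x) d; set c2 := L / 2 * sqnorm d.
(* By the Lipschitz bound psi is nonincreasing on [0, 1]; apply the MVT. *)
pose psi : R -> R := (fun r => f (x + r *: d)) - c1 \*: id - c2 \*: (id * id).
have psi_der (r : R) : is_derive r (1 : R) psi (dotv (G (x + r *: d)) d - c1 - c2 * (2 * r)).
  apply: is_derive_eq; first by do !apply: is_deriveB; exact: is_derive_line.
  by rewrite /GRing.scale /=; ring.
have psi_cont : {within `[0, 1], continuous psi}.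
  by apply: derivable_within_continuous => r _; case: (psi_der r).
have [c /[!in_itv] /= /andP[c_gt0 _]] := MVT ltr01 (fun r _ => psi_der r) psi_cont.
have grad_inc : dotv (G (x + c *: d) - G x) d <= L * c * sqnorm d.
  apply: dotv_le_of_enorm_le; first exact: mulr_gt0.
  have -> : L * c * enorm d = L * enorm (c *: d) by rewrite enormZ gtr0_norm ?mulrA.
  by have := lipG (x + c *: d) x; rewrite addrAC subrr add0r.
have psiE r : psi r = f (x + r *: d) - c1 * r - c2 * (r * r) by [].
rewrite !psiE scale0r scale1r addr0 [x + d]addrC subrK => mvt.
have : dotv (G (x + c *: d)) d - c1 <= c2 * (2 * c).
  by rewrite /c1 -dotvBl /c2; apply: le_trans grad_inc _; lra.
lra.
Qed.

End GradientInequalities.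

Section RintegralSum.
Context d (T : measurableType d) (R : realType) (mu : {measure set T -> \bar R}).

Lemma Rintegral_sum (J : Type) (s : seq J) (h : J -> T -> R) :
  (forall j, mu.-integrable setT (EFin \o h j)) ->
  \int[mu]_(x in setT) (\sum_(j <- s) h j x) = \sum_(j <- s) \int[mu]_(x in setT) h j x.
Proof.
move=> hint; rewrite /Rintegral.
under eq_integral do rewrite -sumEFin.
by rewrite integral_sum // -sum_fine // => j _; exact: integrable_fin_num (hint j).
Qed.

End RintegralSum.

Section VectorExpectation.
Context d (I : measurableType d) (R : realType) (D : probability I R) (n : nat).

Lemma Rintegral_cst_probability (k : R) : \int[D]_(i in setT) k = k.
Proof.
have D1 : fine (D setT) = 1 := congr1 fine (probability_setT D).
by rewrite Rintegral_cst // D1 mulr1.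
Qed.

Variable G : I -> 'rV[R]_n.
Hypothesis Gint : forall j, D.-integrable setT (fun i => (G i ord0 j)%:E).

Let integrable_coordZ (v : 'rV[R]_n) j :
  D.-integrable setT (EFin \o fun i => G i ord0 j * v ord0 j).
Proof.
by apply: eq_integrable (integrableZr measurableT (v ord0 j) (Gint j)) => // i _.
Qed.

Lemma integrable_dotv (v : 'rV[R]_n) : D.-integrable setT (EFin \o fun i => dotv (G i) v).
Proof.
have := integrable_sum measurableT (index_enum 'I_n) (P := xpredT)
  (fun j _ => integrable_coordZ v j).
by apply: eq_integrable => // i _; rewrite /= sumEFin.
Qed.

Lemma Rintegral_dotv (v : 'rV[R]_n) :
  \int[D]_(i in setT) dotv (G i) v = dotv (vexpect D G) v.
Proof.
rewrite /dotv Rintegral_sum //.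
by apply: eq_bigr => j _; rewrite mxE RintegralZr //; exact: Gint.
Qed.

End VectorExpectation.

Lemma expected_smooth_descent (R : realType) (n : nat) (d : measure_display)
  (I : measurableType d) (D : probability I R)
  (fi : I -> 'rV[R]_n -> R^o) (gradfi : I -> 'rV[R]_n -> 'rV[R]_n)
  (f : 'rV[R]_n -> R^o) (gradf : 'rV[R]_n -> 'rV[R]_n) (L : R) :
  0 < L -> (forall i, L_smooth L (fi i) (gradfi i)) ->
  (forall x, D.-integrable setT (fun i => (fi i x)%:E)) ->
  (forall x, f x = \int[D]_(i in setT) fi i x) ->
  (forall x j, D.-integrable setT (fun i => (gradfi i x ord0 j)%:E)) ->
  (forall x, vexpect D (fun i => gradfi i x) = gradf x) ->
  forall x y, f y <= f x + dotv (gradf x) (y - x) + L / 2 * sqnorm (y - x).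
Proof.
move=> L_gt0 fi_smooth fi_int fE gradfi_int gradfE x y.
pose gap i := fi i y - fi i x - dotv (gradfi i x) (y - x).
have diff_int : D.-integrable setT (EFin \o fun i => fi i y - fi i x).
  by apply: eq_integrable (integrableB measurableT (fi_int y) (fi_int x)) => // i _.
have dot_int := integrable_dotv (gradfi_int x) (y - x).
have gap_int : D.-integrable setT (EFin \o gap).
  by apply: eq_integrable (integrableB measurableT diff_int dot_int) => // i _.
have : \int[D]_(i in setT) gap i <= \int[D]_(i in setT) (L / 2 * sqnorm (y - x)).
  apply: le_Rintegral => //; first exact: finite_measure_integrable_cst.
  move=> i _; have [gradi lipi] := fi_smooth i.
  by have := smooth_descent gradi x y L_gt0 lipi; rewrite /gap; lra.
rewrite Rintegral_cst_probability /gap !RintegralB //; [|exact: fi_int..].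
have /= -> := Rintegral_dotv (gradfi_int x) (y - x).
by rewrite gradfE -!fE; lra.
Qed.

Section ProximalStep.
Variables (R : realType) (n : nat) (g : 'rV[R]_n -> \bar R).
Hypothesis g_neqNy : forall x, g x != -oo%E.
Hypothesis gcvx : convex_efun g.

Lemma convex_efun_fin (x y : 'rV[R]_n) (a b t : R) :
  g x = a%:E -> g y = b%:E -> 0 < t -> t < 1 ->
  exists2 r, g (t *: x + (1 - t) *: y) = r%:E & r <= t * a + (1 - t) * b.
Proof.
move=> gx gy t_gt0 t_lt1; have := gcvx x y t_gt0 t_lt1.
rewrite gx gy -!EFinM -EFinD.
case gxy: (g _) => [r| |]; first by rewrite lee_fin; exists r.
- by rewrite leye_eq.
- by have := g_neqNy (t *: x + (1 - t) *: y); rewrite gxy.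
Qed.

Lemma prox_fin_num (tau : R) (y p : 'rV[R]_n) : 0 < tau ->
  (exists x, g x \is a fin_num) -> is_prox tau g y p -> g p \is a fin_num.
Proof.
move=> tau_gt0 [w gw] prox; rewrite fin_numE g_neqNy /=.
apply/eqP => gp; have := prox w; rewrite gp -(fineK gw).
by rewrite gt0_muley ?lte_fin // addye //= -EFinM -EFinD leye_eq.
Qed.

Lemma prox_le_dotv (tau gz gp : R) (y p z : 'rV[R]_n) : 0 < tau ->
  is_prox tau g y p -> g z = gz%:E -> g p = gp%:E ->
  tau * (gp - gz) <= dotv (y - p) (p - z).
Proof.
(* Compare p with the competitor s z + (1 - s) p and let s go to 0. *)
move=> tau_gt0 prox gzE gpE; rewrite -subr_le0.
apply: (le0_of_forall_le_mulr (k := sqnorm (z - p) / 2)) => s s_gt0 s_lt1.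
have [r gu r_le] := convex_efun_fin gzE gpE s_gt0 s_lt1.
have := prox (s *: z + (1 - s) *: p); rewrite gu gpE -!EFinM -!EFinD lee_fin.
have -> : y - (s *: z + (1 - s) *: p) = (y - p) - s *: (z - p).
  by apply/matrixP => i j; rewrite !mxE; ring.
rewrite [sqnorm (y - p - _)]sqnormB sqnormZ dotvZr -[p - z]opprB dotvNr opprK.
move=> prox_s; rewrite -(ler_pM2l s_gt0).
by have := ler_wpM2l (ltW tau_gt0) r_le; lra.
Qed.

End ProximalStep.

Lemma prox_grad_step_bound (R : realType) (n : nat) (x p z Gs Gf : 'rV[R]_n)
    (tau eps L gz gp fsz fsx fx fp : R) : 0 < tau -> 0 < eps ->
  tau * (gp - gz) <= dotv (x - tau *: Gs - p) (p - z) ->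
  dotv Gs (z - x) <= fsz - fsx ->
  fp <= fx + dotv Gf (p - x) + L / 2 * sqnorm (p - x) ->
  sqnorm (p - z) - sqnorm (x - z) <=
    2 * tau * (fsz - fsx) + 2 * tau * (gz - gp)
    + (tau / eps * sqnorm (Gs - Gf) + 2 * tau * (fx - fp)
       + (tau * eps + tau * L - 1) * sqnorm (x - p)).
Proof.
move=> tau_gt0 eps_gt0 prox cvx descent.
have three_point : sqnorm (p - z) - sqnorm (x - z) =
    - sqnorm (x - p) - 2 * dotv (x - p) (p - z).
  by rewrite /sqnorm !dotvE (dotvC p x) (dotvC z x) (dotvC z p); lra.
have prox_split : dotv (x - tau *: Gs - p) (p - z) = dotv (x - p) (p - z)
    + tau * (dotv Gs (z - x) + dotv (x - p) (Gs - Gf) + dotv Gf (x - p)).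
  by rewrite !dotvE (dotvC Gs x) (dotvC Gs p) (dotvC Gs z) (dotvC Gf x) (dotvC Gf p); lra.
rewrite -[p - x]opprB dotvNr sqnormN in descent.
have young := dotv_young (x - p) (Gs - Gf) eps_gt0.
have := ler_wpM2l (ltW tau_gt0) cvx.
have := ler_wpM2l (ltW tau_gt0) young.
have := ler_wpM2l (ltW tau_gt0) descent.
rewrite three_point; rewrite prox_split in prox.
lra.
Qed.

Theorem lemmaA5 (R : realType) (n : nat) (d : measure_display)
  (I : measurableType d) (D : probability I R)
  (fi : I -> 'rV[R]_n -> R^o) (gradfi : I -> 'rV[R]_n -> 'rV[R]_n)
  (f : 'rV[R]_n -> R^o) (gradf : 'rV[R]_n -> 'rV[R]_n)
  (g : 'rV[R]_n -> \bar R) (L : R)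
  (hL : 0 < L)
  (hconv : forall i, convex_fun (fi i))
  (hsmooth : forall i, L_smooth L (fi i) (gradfi i))
  (hfint : forall x, D.-integrable setT (fun i => (fi i x)%:E))
  (hf : forall x, f x = Rintegral D setT (fun i => fi i x))
  (hgint : forall x (j : 'I_n), D.-integrable setT (fun i => (gradfi i x ord0 j)%:E))
  (hgradf : is_gradient f gradf)
  (hgradE : forall x, vexpect D (fun i => gradfi i x) = gradf x)
  (hgproper : proper_fun g) (hgconv : convex_efun g) (hglsc : lsc g)
  (tau : R) (htau : 0 < tau) (xt xt1 : 'rV[R]_n) (it : I)
  (hstep : is_prox tau g (xt - tau *: gradfi it xt) xt1) :
  forall (z : 'rV[R]_n) (eps : R), 0 < eps ->
    ((sqnorm (xt1 - z) - sqnorm (xt - z))%:E <=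
       (2 * tau * (fi it z - fi it xt))%:E
     + (2 * tau)%:E * (g z - g xt1)
     + (tau / eps * sqnorm (gradfi it xt - gradf xt)
        + 2 * tau * (f xt - f xt1)
        + (tau * eps + tau * L - 1) * sqnorm (xt - xt1))%:E)%E.
Proof.
move=> z eps eps_gt0.
have [g_neqNy g_fin] := hgproper.
have /fineK gpE := prox_fin_num g_neqNy htau g_fin hstep.
case gzE: (g z) => [gz| |]; last by have := g_neqNy z; rewrite gzE.
  rewrite -gpE -EFinB -EFinM -!EFinD lee_fin.
  apply: (prox_grad_step_bound htau eps_gt0).
  - exact (prox_le_dotv g_neqNy hgconv htau hstep gzE (esym gpE)).
  - exact (convex_gradient_le (hsmooth it).1 xt z (hconv it)).
  - exact (expected_smooth_descent hL hsmooth hfint hf hgint hgradE xt xt1).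
rewrite -gpE addye // gt0_muley ?lte_fin ?mulr_gt0 // addey // addye //.
exact: leey.
Qed.
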